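(* Let $n > m \ge 1$ be integers and let $w = (w_1, \ldots, w_n) \in \mathbb{R}^n$ be a vector of responses, ordered so that units $1, \ldots, m$ are those originally assigned to treatment and units $m+1, \ldots, n$ are those originally assigned to control. A treatment assignment is a vector $\sigma \in \{0,1\}^n$ with exactly $m$ entries equal to $1$ ($\sigma_j = 1$ meaning unit $j$ is assigned to treatment). For $\eta \in \mathbb{R}$ and such an assignment $\sigma$, define $$T_\eta(w, \sigma) := \frac{1}{m}\sum_{j:\sigma_j = 1} \bigl(w_j + \eta \mathbf{1}_{j > m}\bigr) - \frac{1}{n-m}\sum_{j:\sigma_j = 0} \bigl(w_j - \eta \mathbf{1}_{j \le m}\bigr).$$ Let $\sigma_0 = (1, \ldots, 1, 0, \ldots, 0)$ (first $m$ entries equal to $1$) be the original assignment, let $N \ge 1$, and let $\sigma_1, \ldots, \sigma_N$ be any fixed treatment assignments. Define $$P_\eta := \frac{1 + \sum_{j=1}^N \mathbf{1}\{T_\eta(w, \sigma_j) \ge T_\eta(w, \sigma_0)\}}{1 + N}.$$ Then $P_\eta$ is monotonically nondecreasing in $\eta$: for all real $\eta_1 \le \eta_2$, $P_{\eta_1} \le P_{\eta_2}$.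
   Context: This is the two-sample shift problem: under the hypothesized shift $\eta$, a unit originally treated but reassigned to control would have response lower by $\eta$, and a unit originally in control but reassigned to treatment would have response higher by $\eta$; $T_\eta$ is the difference between the treatment-group mean and control-group mean of these adjusted responses. $P_\eta$ is the Monte Carlo randomization $P$-value for the hypothesis that the shift equals $\eta$, computed with the same data $w$ and the same sampled assignments $\sigma_1,\ldots,\sigma_N$ for every $\eta$. *)

(* Units are indexed by 'I_n (0-based): unit j (0-based) is
   originally treated iff (val j < m), i.e. 1-based index j+1 <= m. *)
From HB Require Import structures.
From mathcomp Require Import all_boot all_order all_algebra.
Set Implicit Arguments. Unset Strict Implicit. Unset Printing Implicit Defensive.
Import Order.TTheory GRing.Theory Num.Theory.
Local Open Scope ring_scope.

Definition is_assignment (n m : nat) (sigma : {ffun 'I_n -> bool}) : Prop :=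
  #|[set j | sigma j]| = m.

Definition sigma0 (n m : nat) : {ffun 'I_n -> bool} := [ffun j => (val j < m)%N].

Definition T_eta (R : realFieldType) (n m : nat) (eta : R) (w : 'I_n -> R)
    (sigma : {ffun 'I_n -> bool}) : R :=
  (m%:R)^-1 * (\sum_(j < n | sigma j) (w j + (if (m <= val j)%N then eta else 0)))
  - ((n - m)%:R)^-1 * (\sum_(j < n | ~~ sigma j) (w j - (if (val j < m)%N then eta else 0))).

Definition P_eta (R : realFieldType) (n m N : nat) (eta : R) (w : 'I_n -> R)
    (sigmas : 'I_N -> {ffun 'I_n -> bool}) : R :=
  (1 + \sum_(k < N) (if T_eta m eta w (sigma0 n m) <= T_eta m eta w (sigmas k)
                     then 1 else 0)) / (1 + N%:R).

(* Under the shift hypothesis, T_eta(w, s) is affine in eta with slope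
   #{units moved into treatment}/m + #{units moved into control}/(n - m) >= 0,
   and the original assignment moves no unit, so its slope is 0.  Hence
   T_eta(w, s) - T_eta(w, sigma0) is nondecreasing in eta and so is every
   indicator in the numerator of P_eta. *)
From HB Require Import structures.
From mathcomp Require Import all_boot all_order all_algebra.
From mathcomp Require Import ring.
Import Order.TTheory GRing.Theory Num.Theory.
Local Open Scope ring_scope.

Section ShiftStatistic.

Context {R : realFieldType} {n m : nat}.
Implicit Types (eta : R) (w : 'I_n -> R) (s : {ffun 'I_n -> bool}).

Definition moved_to_treatment s : nat := #|[pred j : 'I_n | s j && (m <= j)%N]|.
Definition moved_to_control s : nat := #|[pred j : 'I_n | ~~ s j && (j < m)%N]|.

Definition T_eta_slope s : R :=
  (m%:R)^-1 * (moved_to_treatment s)%:R + ((n - m)%:R)^-1 * (moved_to_control s)%:R.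

Lemma sum_cond_const (P Q : pred 'I_n) (x : R) :
  \sum_(j | P j) (if Q j then x else 0) = x * #|[pred j | P j && Q j]|%:R.
Proof. by rewrite -big_mkcondr sumr_const mulr_natr. Qed.

Lemma T_eta_affine eta w s : T_eta m eta w s = T_eta m 0 w s + eta * T_eta_slope s.
Proof.
rewrite /T_eta /T_eta_slope !big_split /= !sumrN !sum_cond_const.
rewrite /moved_to_treatment /moved_to_control; ring.
Qed.

Lemma T_eta_slope_ge0 s : 0 <= T_eta_slope s.
Proof. by rewrite addr_ge0 // mulr_ge0 ?invr_ge0. Qed.

Lemma T_eta_slope_sigma0 : T_eta_slope (sigma0 n m) = 0.
Proof.
rewrite /T_eta_slope /moved_to_treatment /moved_to_control.
by rewrite !eq_card0 ?mulr0 ?addr0 // => j; rewrite inE /sigma0 ffunE; case: ltnP.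
Qed.

Lemma T_eta_sub_sigma0_nondecreasing w s eta1 eta2 : eta1 <= eta2 ->
  T_eta m eta1 w s - T_eta m eta1 w (sigma0 n m)
  <= T_eta m eta2 w s - T_eta m eta2 w (sigma0 n m).
Proof.
move=> le_eta.
do 2!rewrite [T_eta m eta1 _ _]T_eta_affine [T_eta m eta2 _ _]T_eta_affine.
by rewrite T_eta_slope_sigma0 !mulr0 !addr0 lerD2r lerD2l ler_wpM2r ?T_eta_slope_ge0.
Qed.

Lemma T_eta_sigma0_le_mono {w s eta1 eta2} : eta1 <= eta2 ->
  T_eta m eta1 w (sigma0 n m) <= T_eta m eta1 w s ->
  T_eta m eta2 w (sigma0 n m) <= T_eta m eta2 w s.
Proof.
move=> /(T_eta_sub_sigma0_nondecreasing w s) le_diff.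
by rewrite -subr_ge0 => /le_trans/(_ le_diff); rewrite subr_ge0.
Qed.

End ShiftStatistic.

(* Monotonicity holds for arbitrary boolean vectors. *)
Theorem mainTheorem1 (R : realFieldType) (n m N : nat)
  (hm : (1 <= m)%N) (hmn : (m < n)%N) (hN : (1 <= N)%N)
  (w : 'I_n -> R) (sigmas : 'I_N -> {ffun 'I_n -> bool})
  (hsig : forall k, is_assignment m (sigmas k))
  (eta1 eta2 : R) (heta : eta1 <= eta2) :
  P_eta m eta1 w sigmas <= P_eta m eta2 w sigmas.
Proof.
rewrite /P_eta ler_wpM2r ?invr_ge0 ?addr_ge0 // lerD2l.
apply: ler_sum => k _.
case: ifP => [/(T_eta_sigma0_le_mono heta) -> //|_].
by case: ifP.
Qed.
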